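(* Let $G$ be a connected graph. The vertex sets of the connected components of the distance-2 graph $G_2$ are independent sets in $G$ if and only if $G$ is bipartite or complete multipartite.
   Context: The distance-2 graph $G_2$ of $G$ has vertex set $V(G)$, two vertices being adjacent iff their distance in $G$ is exactly 2. *)

From mathcomp Require Import all_boot.
Set Implicit Arguments. Unset Strict Implicit. Unset Printing Implicit Defensive.

Definition simple_graph (T : finType) (e : rel T) :=
  symmetric e /\ irreflexive e.

Definition connected_graph (T : finType) (e : rel T) :=
  forall x y : T, connect e x y.

Definition walk_len (T : finType) (e : rel T) (n : nat) (x y : T) : bool :=
  [exists p : n.-tuple T, path e x p && (last x p == y)].

Definition dist_eq (T : finType) (e : rel T) (x y : T) (n : nat) : bool :=
  walk_len e n x y && [forall m : 'I_n, ~~ walk_len e m x y].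

Definition dist2_graph (T : finType) (e : rel T) : rel T :=
  fun x y => dist_eq e x y 2.

Definition independent (T : finType) (e : rel T) (A : {set T}) :=
  forall x y, x \in A -> y \in A -> ~~ e x y.

Definition components (T : finType) (r : rel T) : {set {set T}} :=
  [set [set y | connect r x y] | x : T].

Definition bipartite (T : finType) (e : rel T) :=
  exists A : {set T}, forall x y, e x y -> (x \in A) != (y \in A).

Definition complete_multipartite (T : finType) (e : rel T) :=
  exists P : {set {set T}}, partition P [set: T] /\
    forall x y, e x y = (pblock P x != pblock P y).

From mathcomp Require Import all_boot.
Set Implicit Arguments. Unset Strict Implicit. Unset Printing Implicit Defensive.

(* Write x ~ y when x and y lie in the same component of G_2.  If the
   components are independent, two neighbours of a common vertex are adjacent
   exactly when they are not ~-related.  If, moreover, any two non-adjacent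
   vertices are ~-related, the components are the parts of a complete
   multipartite graph.  Otherwise a path between non-adjacent, unrelated
   vertices yields an induced path a b c d with a ~ c and b ~ d, which forces
   every neighbour of a to be ~ b.  The property "all neighbours of w are ~ to
   one neighbour n of w" passes from w to n, so by connectivity every vertex
   is ~ a or ~ b, and edges join these two classes: G is bipartite.
   Conversely, a proper 2-colouring, or the partition into parts, is constant
   on the components of G_2. *)

Lemma complete_multipartite_of_equivalence (T : finType) (e r : rel T) :
  equivalence_rel r -> (forall x y, e x y = ~~ r x y) -> complete_multipartite e.
Proof.
move=> r_equiv e_r.
have r_equiv_in : {in [set: T] & &, equivalence_rel r} by move=> x y z _ _ _.
have partP := equivalence_partitionP r_equiv_in.
have /and3P[/eqP cover_P triv_P _] := partP.
exists (equivalence_partition r [set: T]); split=> // x y.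
by rewrite e_r eq_pblock ?cover_P ?inE // pblock_equivalence_partition ?inE.
Qed.

Section Distance2Graph.

Variables (T : finType) (e : rel T).

Lemma walk_len0 x y : walk_len e 0 x y = (x == y).
Proof.
apply/existsP/eqP => [[[[|//] _]] /= /eqP // | ->].
by exists [tuple]; rewrite /= eqxx.
Qed.

Lemma walk_len1 x y : walk_len e 1 x y = e x y.
Proof.
apply/existsP/idP => [[[[|z [|//]] _]] //= /andP[/andP[exz _] /eqP <-] // | exy].
by exists [tuple y]; rewrite /= exy eqxx.
Qed.

Lemma walk_len2P x y : reflect (exists2 z, e x z & e z y) (walk_len e 2 x y).
Proof.
apply: (iffP existsP) => [[[[|z [|t [|//]]] _]] | [z exz ezy]] //=.
  by case/andP=> /and3P[exz ezy _] /eqP <-; exists z.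
by exists [tuple z; y]; rewrite /= exz ezy eqxx.
Qed.

Lemma dist2P x y :
  reflect [/\ x != y, ~~ e x y & exists2 z, e x z & e z y] (dist2_graph e x y).
Proof.
apply: (iffP andP) => [[/walk_len2P common /forallP short] | [nxy nexy common]].
  by split=> //; [move: (short ord0) | move: (short ord_max)];
    rewrite ?walk_len0 ?walk_len1.
split; first exact/walk_len2P.
by apply/forallP => -[[|[|//]] lt_m2]; rewrite ?walk_len0 ?walk_len1.
Qed.

Local Notation same_comp := (connect (dist2_graph e)).

Lemma components_independent (U : eqType) (f : T -> U) :
  (forall x y, dist2_graph e x y -> f x = f y) ->
  (forall x y, e x y -> f x != f y) ->
  forall C, C \in components (dist2_graph e) -> independent e C.
Proof.
move=> f_dist2 f_adj _ /imsetP[x _ ->] u v; rewrite !inE => xu xv.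
have f_comp y : same_comp x y -> f y = f x.
  have f_closed : closed (dist2_graph e) [pred z | f z == f x].
    by move=> s t /f_dist2; rewrite !inE => ->.
  by move/(closed_connect f_closed); rewrite !inE eqxx => /esym/eqP.
by apply: contraTN isT => /f_adj; rewrite (f_comp u) // (f_comp v) // eqxx.
Qed.

Hypothesis sym_e : symmetric e.

Lemma dist2_graph_sym : symmetric (dist2_graph e).
Proof.
move=> x y; apply/dist2P/dist2P => -[nxy nexy [z exz ezy]];
  by split; [rewrite eq_sym | rewrite sym_e | exists z; rewrite sym_e].
Qed.

Lemma same_comp_sym x y : same_comp x y = same_comp y x.
Proof. exact/sym_connect_sym/dist2_graph_sym. Qed.

Lemma same_comp_equiv : equivalence_rel same_comp.
Proof.
by apply/equivalence_relP; split; [apply: connect0 | apply: same_connect same_comp_sym].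
Qed.

Lemma common_nbr_adj z x y : e z x -> e z y -> ~~ same_comp x y -> e x y.
Proof.
move=> ezx ezy; have [-> | nxy] := eqVneq x y; first by rewrite connect0.
apply: contraNT => nexy; apply/connect1/dist2P.
by split=> //; exists z; rewrite // sym_e.
Qed.

Section IndependentComponents.

Hypothesis same_comp_indep : forall x y, same_comp x y -> ~~ e x y.

Lemma nbhd_in_comp_swap c d w n :
  e w n -> same_comp c w -> {subset e w <= same_comp d} ->
  {subset e n <= same_comp c}.
Proof.
move=> ewn cw Nw m enm; apply: contraT => ncm.
have nwm : ~~ same_comp w m by apply: contra ncm; apply: connect_trans cw.
have ewm : e w m by apply: (common_nbr_adj (z := n)); rewrite // sym_e.
have dn : same_comp d n := Nw n ewn.
have /same_comp_indep : same_comp n m.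
  by apply: connect_trans (Nw m ewm); rewrite same_comp_sym.
by rewrite (enm : e n m).
Qed.

Lemma bipartite_of_nbhd_in_comp a b :
  connected_graph e -> e a b -> {subset e a <= same_comp b} -> bipartite e.
Proof.
move=> conn eab Na.
pose two_sided := [pred w | same_comp a w && (e w \subset same_comp b)
                          || same_comp b w && (e w \subset same_comp a)].
have two_sided_closed : closed e two_sided.
  apply: (intro_closed (sym_connect_sym sym_e)) => w n ewn.
  rewrite !inE => /orP[/andP[aw /subsetP Nw] | /andP[bw /subsetP Nw]].
    apply/orP; right; apply/andP; split; first exact: Nw.
    exact/subsetP/(nbhd_in_comp_swap ewn aw Nw).
  apply/orP; left; apply/andP; split; first exact: Nw.
  exact/subsetP/(nbhd_in_comp_swap ewn bw Nw).
have two_sided_all w : w \in two_sided.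
  rewrite -(closed_connect two_sided_closed (conn a w)) inE connect0.
  by apply/orP; left; apply/subsetP.
have nab : ~~ same_comp a b := contraL (@same_comp_indep a b) eab.
exists [set w | same_comp a w] => u v euv; rewrite !inE.
have /[!inE] /orP[/andP[au /subsetP Nu] | /andP[bu /subsetP Nu]] := two_sided_all u.
  rewrite au; apply: contra nab => av.
  by apply: connect_trans av _; rewrite same_comp_sym; exact: Nu.
have av : same_comp a v := Nu v euv.
rewrite av eqb_id; apply: contra nab => au.
by apply: connect_trans au _; rewrite same_comp_sym.
Qed.

Lemma nbhd_in_comp_of_P4 a b c d :
  e a b -> e b c -> e c d -> same_comp a c -> same_comp b d -> ~~ e a d ->
  {subset e a <= same_comp b}.
Proof.
move=> eab ebc ecd ac bd nead n ean; apply: contraT => nbn.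
have nan : ~~ same_comp a n := contraL (@same_comp_indep a n) ean.
have ebn : e b n by apply: (common_nbr_adj (z := a)); rewrite // sym_e.
have ncn : ~~ same_comp c n by apply: contra nan; apply: connect_trans ac.
have ecn : e c n by apply: (common_nbr_adj (z := b)); rewrite // sym_e.
have ndn : ~~ same_comp d n by apply: contra nbn; apply: connect_trans bd.
have edn : e d n by apply: (common_nbr_adj (z := c)); rewrite // sym_e.
have nad : ~~ same_comp a d.
  apply: contraL ecd => ad; apply: same_comp_indep.
  by apply: connect_trans ad; rewrite same_comp_sym.
by case/negP: nead; apply: (common_nbr_adj (z := n)); rewrite // sym_e.
Qed.

Lemma exists_nbhd_in_comp x p :
  path e x p -> ~~ same_comp x (last x p) -> ~~ e x (last x p) ->
  exists a b, e a b /\ {subset e a <= same_comp b}.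
Proof.
have [n] := ubnP (size p); elim: n => // n IHn in x p *.
case: p => [|p1 [|p2 q]] //= lt_pn; first by rewrite connect0.
  by case/andP => ->.
case/and3P=> ex1 e12 path_q; set y := last p2 q => nxy nexy.
have [p1y | np1y] := boolP (same_comp p1 y); last first.
  have [ep1y | nep1y] := boolP (e p1 y).
    by case/negP: nexy; apply: (common_nbr_adj (z := p1)); rewrite // sym_e.
  by apply: (IHn p1 (p2 :: q)); rewrite //= e12.
have [e2y | ne2y] := boolP (e p2 y); last first.
  apply: (IHn p2 q) => //; first exact: ltnW.
  apply: contraL e12 => p2y; apply: same_comp_indep.
  by apply: connect_trans p1y _; rewrite same_comp_sym.
have x2 : same_comp x p2.
  apply: contraT => nx2; case/negP: nexy.
  have ex2 : e x p2 by apply: (common_nbr_adj (z := p1)); rewrite // sym_e.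
  by apply: (common_nbr_adj (z := p2)); rewrite // sym_e.
by exists x, p1; split; last exact: (nbhd_in_comp_of_P4 ex1 e12 e2y).
Qed.

Lemma bipartite_or_complete_multipartite :
  connected_graph e -> bipartite e \/ complete_multipartite e.
Proof.
move=> conn.
have [/existsP[x /existsP[y /andP[nxy nexy]]] | /existsPn sep] :=
  boolP [exists x, exists y, ~~ same_comp x y && ~~ e x y].
  left; move: nxy nexy; have /connectP[p ep ->] := conn x y => nxy nexy.
  have [a [b [eab Na]]] := exists_nbhd_in_comp ep nxy nexy.
  exact: bipartite_of_nbhd_in_comp conn eab Na.
right; apply: (complete_multipartite_of_equivalence same_comp_equiv) => x y.
apply/idP/idP => [exy | nxy]; first exact: contraL (@same_comp_indep x y) exy.
by have /existsPn/(_ y) := sep x; rewrite nxy negbK.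
Qed.

End IndependentComponents.

End Distance2Graph.

Theorem lemma4p9 (T : finType) (e : rel T) :
  simple_graph e -> connected_graph e ->
  ((forall C, C \in components (dist2_graph e) -> independent e C) <->
   (bipartite e \/ complete_multipartite e)).
Proof.
move=> [sym_e _] conn; split=> [indep | [[A bipA] | [P [_ eP]]]].
- apply: bipartite_or_complete_multipartite => // x y xy.
  apply: (indep [set z | connect (dist2_graph e) x z]); rewrite ?inE ?connect0 //.
  exact: imset_f.
- apply: (components_independent (f := fun x => x \in A)) => // x y.
  case/dist2P=> _ _ [z /bipA + /bipA].
  by case: (x \in A) (y \in A) (z \in A) => -[] [].
- apply: (components_independent (f := pblock P)) => [x y | x y]; last by rewrite eP.
  by case/dist2P => _; rewrite eP negbK => /eqP.
Qed.
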